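(* Let $I$ be a monomial ideal of $R=K[x_1,\ldots,x_d]$ ($K$ a field). The function $\exp:\mathbb{R}_+\to\mathcal{T}$, $\exp(r)=\overline{I^r}$, where $\mathbb{R}_+$ carries the Euclidean topology and $\mathcal{T}=\{\overline{I^r}\mid r\in\mathbb{R}_+\}$ carries the discrete topology, is left continuous. Equivalently, for every $r>0$ there exists $\varepsilon_0>0$ such that $\overline{I^{r-\varepsilon}}=\overline{I^r}$ for all $0<\varepsilon<\varepsilon_0$.
   Context: $\mathbb{R}_+$ denotes the non-negative reals, $\mathbb{N}$ the non-negative integers, and $\mathbf{x}^{\mathbf{a}}=x_1^{a_1}\cdots x_d^{a_d}$. $NP(I)$ is the convex hull in $\mathbb{R}^d$ of $\{\mathbf{a}\in\mathbb{N}^d\mid \mathbf{x}^{\mathbf{a}}\in I\}$. For real $t\ge0$, the $t$-th real power of $I$ is $\overline{I^t}=(\{\mathbf{x}^{\mathbf{a}}\mid \mathbf{a}\in t\cdot NP(I)\cap\mathbb{N}^d\})$, where $t\cdot NP(I)=\{t\mathbf{v}\mid \mathbf{v}\in NP(I)\}$. *)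

From mathcomp Require Import all_boot all_order all_algebra.
From mathcomp Require Import mpoly.
From mathcomp Require Import reals.
Set Implicit Arguments. Unset Strict Implicit. Unset Printing Implicit Defensive.
Import Order.TTheory GRing.Theory Num.Theory.
Local Open Scope ring_scope.

Section Defs.
Variables (K : fieldType) (d : nat).

Definition ideal_gen (S : {mpoly K[d]} -> Prop) (p : {mpoly K[d]}) : Prop :=
  exists l : seq ({mpoly K[d]} * {mpoly K[d]}),
    (forall q, q \in l -> S q.2) /\ p = \sum_(q <- l) q.1 * q.2.

Definition monomial_ideal (G : 'X_{1..d} -> Prop) : {mpoly K[d]} -> Prop :=
  ideal_gen (fun q => exists2 m, G m & q = 'X_[m]).

Variable R : realType.

Definition NP (I : {mpoly K[d]} -> Prop) (v : 'I_d -> R) : Prop :=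
  exists l : seq ('X_{1..d} * R),
    [/\ forall q, q \in l -> I 'X_[q.1] /\ 0 <= q.2,
        \sum_(q <- l) q.2 = 1
      & forall i : 'I_d, v i = \sum_(q <- l) q.2 * ((q.1 i)%:R)].

Definition in_scaled_NP (I : {mpoly K[d]} -> Prop) (t : R) (a : 'X_{1..d}) : Prop :=
  exists2 v, NP I v & forall i : 'I_d, (a i)%:R = t * v i.

(* The t-th real power  \overline{I^t} = (x^a | a in t*NP(I) cap N^d). *)
Definition real_power (I : {mpoly K[d]} -> Prop) (t : R) : {mpoly K[d]} -> Prop :=
  monomial_ideal (in_scaled_NP I t).

End Defs.

(* By Dickson's lemma the exponent set of I has a finite set E of minimal
   elements, so NP(I) = conv(E) + R_+^d, and a lattice point a lies in t NP(I)
   (t > 0) iff t conv(E) has a point below a.  This condition is inherited by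
   smaller t, and it is closed in t because the simplex of weights is compact.
   Points of t conv(E) have coordinates at most t max(E), so for t <= r only
   the truncation of a at some N >= r max(E) matters.  There are finitely many
   truncated vectors, and each one failing the condition at r fails it on a
   whole neighbourhood of r. *)

From mathcomp Require Import all_boot all_order all_algebra.
From mathcomp Require Import mpoly.
From mathcomp Require Import reals.
From mathcomp Require Import boolp classical_sets topology normedtype.
Import Order.TTheory GRing.Theory Num.Theory.
Import numFieldNormedType.Exports.
Set Implicit Arguments. Unset Strict Implicit. Unset Printing Implicit Defensive.
Local Open Scope ring_scope.

Local Open Scope classical_set_scope.

Lemma near_closed (T : topologicalType) (A : set T) x :
  closed A -> \forall y \near x, A y -> A x.
Proof.
move=> A_closed; have [Ax|nAx] := pselect (A x); first exact: nearW.
have nAopen : open (~` A) by rewrite -closedC setCK.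
by apply: filterS (open_nbhs_nbhs (conj nAopen nAx)) => y.
Qed.

Section ScaledHull.
Variables (R : realType) (n d : nat) (m : 'I_n -> 'I_d -> R).

Definition hull_le (t : R) (b : 'I_d -> R) := exists lam : 'I_n -> R,
  [/\ forall j, 0 <= lam j, \sum_j lam j = 1 & forall i, t * \sum_j lam j * m j i <= b i].

Let weight (x : R * 'rV[R]_n) j := x.2 ord0 j.

Let feasible b := [set x | \sum_j weight x j = 1] `&`
  \bigcap_i [set x | x.1 * \sum_j weight x j * m j i <= b i].

Let feasible_closed b : closed (feasible b).
Proof.
have weight_cont j : continuous (weight^~ j).
  move=> x; apply: (@continuous_comp _ _ _ snd (fun v : 'rV[R]_n => v ord0 j)).
    exact: cvg_snd.
  exact: coord_continuous.
apply: closedI.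
  apply: (continuous_closedP (fun x => \sum_j weight x j)).1 _ _ (closed_eq (y := 1)).
  by apply: (continuous_big add_continuous) => j _; exact: weight_cont.
apply: closed_bigI => i _; apply: (continuous_closedP _).1 _ _ (closed_le (y := b i)).
move=> x; apply: continuousM; first exact: cvg_fst.
apply: (continuous_big add_continuous) => j _ y.
by apply: continuousM; [exact: weight_cont | exact: cst_continuous].
Qed.

Lemma hull_le_closed b : closed [set t | hull_le t b].
Proof.
move=> r r_cl.
(* The witnesses [(t, lam)] with [t] near [r] form a compact set, whose
   projection is closed and adheres to [r]. *)
pose C : set (R * 'rV[R]_n) :=
  `[r - 1, r + 1] `*` [set v : 'rV[R]_n | forall j, `[0, 1] (v ord0 j)] `&` feasible b.
have C_compact : compact C.
  apply: compact_closedI; last exact: feasible_closed.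
  apply: (@compact_setX R 'rV[R]_n); first exact: segment_compact.
  exact: (rV_compact (fun _ : 'I_n => @segment_compact R 0 1)).
have fstC_closed : closed (fst @` C).
  apply: compact_closed; first exact: Rhausdorff.
  apply: continuous_compact C_compact.
  by apply: continuous_subspaceT => x; exact: cvg_fst.
have /fstC_closed[[t v] [[_ v01] [sum_v t_v]] /= <-] : closure (fst @` C) r.
  move=> U /nbhs_ballP[e e_gt0 reU].
  have e1_gt0 : 0 < Order.min e 1 by rewrite lt_min e_gt0 ltr01.
  have [t [[lam [lam_ge0 lam_sum t_lam]] rt]] := r_cl _ (nbhsx_ballx _ _ e1_gt0).
  have weightE j : weight (t, \row_j lam j) j = lam j by rewrite /weight mxE.
  exists t; split; last by apply: reU; apply: le_ball rt; rewrite ge_min lexx.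
  exists (t, \row_j lam j) => //; split; [split|split] => /=.
  - have : ball r 1 t by apply: le_ball rt; rewrite ge_min lexx orbT.
    by rewrite /ball /= in_itv /= ltr_distlC => /andP[/ltW -> /ltW ->].
  - move=> j; rewrite mxE in_itv /= lam_ge0 -lam_sum (bigD1 j) //= lerDl.
    exact: sumr_ge0.
  - by under eq_bigr do rewrite weightE.
  - move=> i _ /=; rewrite (eq_bigr (fun j => lam j * m j i)) => [|j _].
      exact: t_lam.
    by rewrite weightE.
exists (weight (t, v)); split => // [j|i].
  by have := v01 j; rewrite /= in_itv => /andP[].
exact: t_v.
Qed.

Lemma hull_le_boundW t b b' : (forall i, b i <= b' i) -> hull_le t b -> hull_le t b'.
Proof.
by move=> le_bb' [lam [? ? t_lam]]; exists lam; split => // i; exact: le_trans (le_bb' i).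
Qed.

Hypothesis m_ge0 : forall j i, 0 <= m j i.

Lemma hull_le_scaleW s t b : s <= t -> hull_le t b -> hull_le s b.
Proof.
move=> le_st [lam [lam_ge0 lam_sum t_lam]]; exists lam; split => // i.
apply: le_trans (t_lam i); apply: ler_wpM2r le_st.
by apply: sumr_ge0 => j _; exact: mulr_ge0.
Qed.

Lemma hull_le_cap M N t b : (forall j i, m j i <= M) -> 0 <= t -> t * M <= N ->
  hull_le t b -> hull_le t (fun i => Num.min (b i) N).
Proof.
move=> le_mM t_ge0 le_tMN [lam [lam_ge0 lam_sum t_lam]]; exists lam; split => // i.
rewrite le_min t_lam; apply: le_trans le_tMN; apply: ler_wpM2l => //.
apply: le_trans (ler_sum _ (fun j _ => ler_wpM2l (lam_ge0 j) (le_mM j i))) _.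
by rewrite -mulr_suml lam_sum mul1r.
Qed.

End ScaledHull.

Local Close Scope classical_set_scope.

Section Dickson.
Variable d : nat.
Local Open Scope nat_scope.

Definition le_upto (k : nat) (m a : 'X_{1..d}) := forall i : 'I_d, i < k -> m i <= a i.

Lemma le_uptoS k (i0 : 'I_d) : i0 = k :> nat ->
  forall m a, le_upto k.+1 m a <-> le_upto k m a /\ m i0 <= a i0.
Proof.
move=> i0k m a; split => [le_ma | [le_ma le_i0] i].
  by split=> [i ik|]; apply: le_ma; rewrite ?i0k // ltnS ltnW.
rewrite ltnS leq_eqVlt => /orP[/eqP ik|]; last exact: le_ma.
by have -> : i = i0 by apply: val_inj; rewrite /= ik i0k.
Qed.

Lemma dickson_upto k (S : 'X_{1..d} -> Prop) : exists2 F : seq 'X_{1..d},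
  (forall m, m \in F -> S m) & forall a, S a -> exists2 m, m \in F & le_upto k m a.
Proof.
elim: k S => [|k IH] S.
  have [[x Sx]|noS] := pselect (exists x, S x).
    by exists [:: x] => [m|a _]; [rewrite inE => /eqP -> | exists x; rewrite ?inE].
  by exists [::] => // a Sa; case: noS; exists a.
have [F0 F0S F0_cover] := IH S.
have [dk|kd] := leqP d k.
  exists F0 => // a /F0_cover[m mF0 le_ma]; exists m => // i _.
  by apply: le_ma; apply: leq_trans dk.
pose i0 := Ordinal kd.
have leS := @le_uptoS k i0 erefl.
pose K := \max_(m <- F0) m i0.
have [F1 F1S F1_cover] : exists2 F1 : seq 'X_{1..d}, (forall m, m \in F1 -> S m) &
    forall a, S a -> a i0 < K -> exists2 m, m \in F1 & le_upto k.+1 m a.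
  elim: K => [|J [F FS F_cover]]; first by exists [::].
  have [FJ FJS FJ_cover] := IH (fun a => S a /\ a i0 = J).
  exists (F ++ FJ) => [m|a Sa]; first by rewrite mem_cat => /orP[/FS|/FJS[]].
  rewrite ltnS leq_eqVlt => /orP[/eqP aJ|/(F_cover a Sa)[m mF le_ma]].
    have [m mFJ le_ma] := FJ_cover a (conj Sa aJ).
    exists m; first by rewrite mem_cat mFJ orbT.
    by apply/leS; split => //; have [_ ->] := FJS m mFJ; rewrite aJ.
  by exists m; rewrite ?mem_cat ?mF.
exists (F0 ++ F1) => [m|a Sa]; first by rewrite mem_cat => /orP[/F0S|/F1S].
have [aK|Ka] := ltnP (a i0) K.
  by have [m mF1 le_ma] := F1_cover a Sa aK; exists m; rewrite ?mem_cat ?mF1 ?orbT.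
have [m mF0 le_ma] := F0_cover a Sa; exists m; first by rewrite mem_cat mF0.
apply/leS; split => //.
apply: leq_trans Ka.
exact: (@leq_bigmax_seq _ F0 xpredT (fun m : 'X_{1..d} => m i0) m mF0 isT).
Qed.

Lemma dickson (S : 'X_{1..d} -> Prop) : exists2 F : seq 'X_{1..d},
  (forall m, m \in F -> S m) & forall a, S a -> exists2 m, m \in F & (m <= a)%MM.
Proof.
have [F FS F_cover] := dickson_upto d S; exists F => // a /F_cover[m mF le_ma].
by exists m => //; apply/mnm_lepP => i; exact: le_ma.
Qed.

End Dickson.

Lemma sum_delta (R : nzSemiRingType) n (j0 : 'I_n) (F : 'I_n -> R) :
  \sum_j (j == j0)%:R * F j = F j0.
Proof.
by rewrite (bigD1 j0) //= eqxx mul1r big1 ?addr0 // => j /negPf ->; rewrite mul0r.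
Qed.

Section NewtonPolyhedron.
Variables (K : fieldType) (d : nat) (R : realType) (I : {mpoly K[d]} -> Prop).

(* [NP I v] unfolds to [NP_cone I 1 v]. *)
Definition NP_cone (c : R) (v : 'I_d -> R) := exists l : seq ('X_{1..d} * R),
  [/\ forall q, q \in l -> I 'X_[q.1] /\ 0 <= q.2, \sum_(q <- l) q.2 = c
    & forall i, v i = \sum_(q <- l) q.2 * (q.1 i)%:R].

Lemma NP_cone0 : NP_cone 0 (fun=> 0).
Proof. by exists [::]; split => [//||i]; rewrite big_nil. Qed.

Lemma NP_coneD c c' v w :
  NP_cone c v -> NP_cone c' w -> NP_cone (c + c') (fun i => v i + w i).
Proof.
move=> [l [l_I <- vE]] [l' [l'_I <- wE]]; exists (l ++ l'); split.
- by move=> q; rewrite mem_cat => /orP[/l_I|/l'_I].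
- by rewrite big_cat.
- by move=> i; rewrite big_cat vE wE.
Qed.

Lemma NP_coneZ k c v : 0 <= k -> NP_cone c v -> NP_cone (k * c) (fun i => k * v i).
Proof.
move=> k_ge0 [l [l_I <- vE]]; exists [seq (q.1, k * q.2) | q <- l]; split.
- by move=> _ /mapP[q /l_I[? ?] ->]; split => //; exact: mulr_ge0.
- by rewrite big_map mulr_sumr.
- by move=> i; rewrite big_map vE mulr_sumr; apply: eq_bigr => q _; rewrite mulrA.
Qed.

Lemma NP_cone_sum (J : Type) (s : seq J) (c : J -> R) (v : J -> 'I_d -> R) :
  (forall j, NP_cone (c j) (v j)) ->
  NP_cone (\sum_(j <- s) c j) (fun i => \sum_(j <- s) v j i).
Proof.
move=> NPv; elim: s => [|j s IH].
  by rewrite big_nil; under eq_fun do rewrite big_nil; exact: NP_cone0.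
rewrite big_cons (_ : (fun i => _) = fun i => v j i + \sum_(k <- s) v k i).
  exact: NP_coneD.
by apply: funext => i; rewrite big_cons.
Qed.

Hypothesis I_up : forall a b, I 'X_[a] -> (a <= b)%MM -> I 'X_[b].

Lemma NP_shift (v : 'I_d -> R) (i : 'I_d) (k : nat) :
  NP I v -> NP I (fun j => v j + (k * (i == j))%:R).
Proof.
move=> [l [l_I sum_l vE]].
pose shift (a : 'X_{1..d}) := [multinom (a j + k * (i == j))%N | j < d].
exists [seq (shift q.1, q.2) | q <- l]; split.
- move=> _ /mapP[q /l_I[Iq q_ge0] ->]; split => //; apply: I_up Iq _.
  by apply/mnm_lepP => j; rewrite mnmE leq_addr.
- by rewrite big_map.
- move=> j; rewrite big_map vE.
  under [RHS]eq_bigr do rewrite /= mnmE natrD mulrDr.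
  by rewrite big_split /= -mulr_suml sum_l mul1r.
Qed.

Lemma NP_up (v w : 'I_d -> R) : NP I v -> (forall i, v i <= w i) -> NP I w.
Proof.
move=> NPv le_vw.
pose k := Num.Def.archi_bound (\sum_i (w i - v i)).
have sum_lt_k : \sum_i (w i - v i) < k%:R.
  by apply/archi_boundP/sumr_ge0 => i _; rewrite subr_ge0.
have k_gt0 : 0 < k%:R :> R.
  by apply: le_lt_trans sum_lt_k; apply/sumr_ge0 => i _; rewrite subr_ge0.
pose theta i := (w i - v i) / k%:R.
have theta_ge0 i : 0 <= theta i by apply: divr_ge0; [rewrite subr_ge0 | exact: ltW].
have sum_theta_le1 : 0 <= 1 - \sum_i theta i.
  by rewrite subr_ge0 -mulr_suml ler_pdivrMr // mul1r ltW.
(* [w = (1 - \sum_i theta i) v + \sum_i theta i (v + k e_i)] *)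
have := NP_coneD (NP_coneZ sum_theta_le1 NPv)
  (NP_cone_sum (index_enum 'I_d) (fun i => NP_coneZ (theta_ge0 i) (NP_shift i k NPv))).
rewrite mulr1 (eq_bigr theta (fun i _ => mulr1 (theta i))) subrK.
congr NP_cone; apply: funext => j.
under [X in _ + X]eq_bigr do rewrite mulrDr.
rewrite big_split /= -[\sum_(i < d) theta i * v j]mulr_suml addrA -mulrDl subrK mul1r.
under [X in _ + X]eq_bigr do rewrite natrM (mulrC k%:R) mulrCA.
by rewrite sum_delta /theta divfK ?gt_eqF // addrC subrK.
Qed.

End NewtonPolyhedron.

Definition mnm_points {R : nzSemiRingType} d (E : seq 'X_{1..d}) :
  'I_(size E) -> 'I_d -> R := fun j i => (nth 0%MM E j i)%:R.
Arguments mnm_points {R d} E.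

Section HullOfGenerators.
Variables (K : fieldType) (d : nat) (R : realType) (I : {mpoly K[d]} -> Prop).
Hypothesis I_up : forall a b, I 'X_[a] -> (a <= b)%MM -> I 'X_[b].
Variable E : seq 'X_{1..d}.
Hypothesis E_I : forall m, m \in E -> I 'X_[m].
Hypothesis E_cover : forall a, I 'X_[a] -> exists2 m, m \in E & (m <= a)%MM.
Let P : 'I_(size E) -> 'I_d -> R := mnm_points E.

Lemma NP_cone_ge_hull c v : NP_cone I c v -> exists lam : 'I_(size E) -> R,
  [/\ forall j, 0 <= lam j, \sum_j lam j = c & forall i, \sum_j lam j * P j i <= v i].
Proof.
move=> [l [l_I <- vE]]; have -> : v = fun i => \sum_(q <- l) q.2 * (q.1 i)%:R.
  exact: funext.
elim: l l_I {vE} => [|[a w] l IH] l_I.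
  exists (fun=> 0); split=> [j||i]; rewrite ?big_nil ?big1 // => j _.
  by rewrite mul0r.
have [/E_cover[m mE le_ma] w_ge0] := l_I _ (mem_head _ _).
case: IH => [q ql|lam [lam_ge0 lam_sum lam_le]]; first by apply: l_I; rewrite inE ql orbT.
have j0_lt : (index m E < size E)%N by rewrite index_mem.
pose j0 := Ordinal j0_lt.
exists (fun j => lam j + (j == j0)%:R * w); split.
- by move=> j; apply: addr_ge0; [exact: lam_ge0 | exact: mulr_ge0].
- by rewrite big_split /= sum_delta lam_sum big_cons addrC.
- move=> i; rewrite big_cons addrC.
  under [leLHS]eq_bigr do rewrite mulrDl -mulrA.
  rewrite big_split /= sum_delta; apply: lerD (lam_le i) _; apply: ler_wpM2l => //.
  by rewrite /P /mnm_points nth_index // ler_nat; move/mnm_lepP: le_ma.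
Qed.

Lemma NP_of_hull (lam : 'I_(size E) -> R) v :
  (forall j, 0 <= lam j) -> \sum_j lam j = 1 ->
  (forall i, \sum_j lam j * P j i <= v i) -> NP I v.
Proof.
move=> lam_ge0 lam_sum lam_le.
apply: (NP_up I_up (v := fun i => \sum_j lam j * P j i)) lam_le.
exists [seq (nth 0%MM E j, lam j) | j : 'I_(size E) <- index_enum 'I_(size E)]; split.
- by move=> _ /mapP[j _ ->]; split; [apply/E_I/mem_nth | exact: lam_ge0].
- by rewrite big_map.
- by move=> i; rewrite big_map.
Qed.

Lemma in_scaled_NP_hull t a : 0 < t ->
  in_scaled_NP I t a <-> hull_le P t (fun i => (a i)%:R).
Proof.
move=> t_gt0; split => [[v /NP_cone_ge_hull[lam [lam_ge0 lam_sum lam_le]] aE]|].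
  by exists lam; split => // i; rewrite aE; apply: ler_wpM2l => //; exact: ltW.
move=> [lam [lam_ge0 lam_sum t_lam]]; exists (fun i => (a i)%:R / t).
  by apply: NP_of_hull lam_ge0 lam_sum _ => i; rewrite ler_pdivlMr // mulrC.
by move=> i; rewrite mulrC divfK ?gt_eqF.
Qed.

Lemma in_scaled_NP_left_stable (r : R) : 0 < r -> \forall t \near r,
  0 < t -> t <= r -> forall a, in_scaled_NP I t a <-> in_scaled_NP I r a.
Proof.
move=> r_gt0.
pose M := (\max_(m <- E) \max_(i < d) m i)%N.
have le_PM j i : P j i <= M%:R.
  rewrite ler_nat; apply: leq_trans (leq_bigmax i) _.
  exact: (@leq_bigmax_seq _ E xpredT (fun m : 'X_{1..d} => \max_(i < d) m i) _
    (mem_nth _ (ltn_ord j)) isT).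
pose N := Num.Def.archi_bound (r * M%:R).
have le_rMN : r * M%:R <= N%:R.
  by apply/ltW/archi_boundP/mulr_ge0; [exact: ltW | exact: ler0n].
pose capped (c : {ffun 'I_d -> 'I_N.+1}) i : R := (c i : nat)%:R.
have := filter_forall (nbhs_filter r)
  (fun c => near_closed r (hull_le_closed (m := P) (b := capped c))).
apply: filterS => t gap t_gt0 t_le_r a; rewrite !in_scaled_NP_hull //.
split; last by apply: hull_le_scaleW t_le_r => j i; exact: ler0n.
move=> ta; pose c : {ffun 'I_d -> 'I_N.+1} := [ffun i => inord (minn (a i) N)].
have cE : capped c = fun i => Num.min (a i)%:R N%:R.
  by apply: funext => i; rewrite /capped ffunE inordK ?ltnS ?geq_minr // -natr_min.
apply: hull_le_boundW (gap c _) => [i|]; first by rewrite cE ge_min lexx.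
rewrite cE; apply: hull_le_cap ta => //; first exact: ltW.
apply: le_trans le_rMN; apply: ler_wpM2r => //; exact: ler0n.
Qed.

End HullOfGenerators.

Lemma ideal_gen_mull (K : fieldType) d (S : {mpoly K[d]} -> Prop) p q :
  ideal_gen S p -> ideal_gen S (q * p).
Proof.
move=> [l [l_S ->]]; exists [seq (q * x.1, x.2) | x <- l]; split.
  by move=> _ /mapP[x xl ->]; exact: l_S xl.
by rewrite mulr_sumr big_map; apply: eq_bigr => x _; rewrite mulrA.
Qed.

Lemma monomial_ideal_up (K : fieldType) d (G : 'X_{1..d} -> Prop) a b :
  monomial_ideal (K := K) G 'X_[a] -> (a <= b)%MM -> monomial_ideal (K := K) G 'X_[b].
Proof.
move=> Ia /mnm_lepP le_ab.
have -> : b = (b - a + a)%MM by apply/mnmP => i; rewrite mnmDE mnmBE subnK.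
by rewrite mpolyXD; exact: ideal_gen_mull.
Qed.

Theorem proposition5p6 (K : fieldType) (d : nat) (R : realType)
    (G : 'X_{1..d} -> Prop) (r : R) :
  0 < r ->
  exists eps0 : R, [/\ 0 < eps0, eps0 <= r &
    forall eps : R, 0 < eps -> eps < eps0 ->
      forall p : {mpoly K[d]},
        real_power (monomial_ideal G) (r - eps) p <->
        real_power (monomial_ideal G) r p].
Proof.
move=> r_gt0; set I := monomial_ideal (K := K) G.
have [E E_I E_cover] := dickson (fun a => I 'X_[a]).
have /nbhs_ballP[e /= e_gt0 stable] :=
  in_scaled_NP_left_stable (@monomial_ideal_up K d G) E_I E_cover r_gt0.
exists (Order.min r e); split => [||eps eps_gt0].
- by rewrite lt_min r_gt0 e_gt0.
- by rewrite ge_min lexx.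
rewrite lt_min => /andP[eps_lt_r eps_lt_e] p.
rewrite /real_power; suff -> : in_scaled_NP I (r - eps) = in_scaled_NP I r by [].
apply: funext => a; apply: propext; apply: stable.
- by rewrite /ball /= opprB addrC subrK gtr0_norm.
- by rewrite subr_gt0.
- by rewrite gerBl ltW.
Qed.
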